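(* Let $\alpha\geq 0$ and $r_\alpha(x)=\|x\|_1-\alpha\|x\|_2$ on $\mathbb{R}^N$. Let $l:\mathbb{R}^N\to\mathbb{R}$ be differentiable with $\|\nabla l(x)-\nabla l(y)\|_2\leq L\|x-y\|_2$ for all $x,y$, for some $L>0$. Define $E(x)=r_\alpha(x)+l(x)$ and assume that $E$ is coercive, i.e., $E(x)\to+\infty$ as $\|x\|_2\to+\infty$. Let $0<\lambda<1/L$, let $x^0\in\mathbb{R}^N$, and let $(x^k)$ be generated by the forward-backward splitting iteration $$x^{k+1}\in\operatorname{argmin}_{x}\ \Big(r_\alpha(x)+\frac{1}{2\lambda}\big\|x-(x^k-\lambda\nabla l(x^k))\big\|_2^2\Big).$$ Then the sequence of objective values $E(x^k)$ is decreasing, there exists a subsequence of $(x^k)$ that converges to a stationary point of $E$, and every limit point of $(x^k)$ is a stationary point of $E$.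
   Context: A stationary point of $E$ is a point $x$ satisfying the first-order optimality condition $0\in\partial r_\alpha(x)+\nabla l(x)$, where $\partial$ denotes the (limiting) subdifferential. *)

From HB Require Import structures.
From mathcomp Require Import all_boot all_order all_algebra.
From mathcomp Require Import all_classical all_reals all_analysis.
Set Implicit Arguments. Unset Strict Implicit. Unset Printing Implicit Defensive.
Import Order.TTheory GRing.Theory Num.Theory.
Import numFieldNormedType.Exports.
Local Open Scope classical_set_scope.
Local Open Scope ring_scope.

Section Defs.
Variables (R : realType) (N : nat).
Notation V := 'rV[R]_N.

Definition dotp (x y : V) : R := \sum_(i < N) x ord0 i * y ord0 i.
Definition norm1 (x : V) : R := \sum_(i < N) `|x ord0 i|.
Definition norm2 (x : V) : R := Num.sqrt (\sum_(i < N) (x ord0 i) ^+ 2).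

Definition r_alpha (alpha : R) (x : V) : R := norm1 x - alpha * norm2 x.

Definition grad (f : V -> R) (x : V) : V :=
  \row_(i < N) ('d f x (delta_mx ord0 i : V)).

(* Frechet (regular) subdifferential:
   v \in \hat\partial f(x) iff liminf_{y -> x, y <> x}
   (f y - f x - <v, y - x>) / ||y - x|| >= 0. *)
Definition frechet_subdiff (f : V -> R) (x : V) : set V :=
  [set v | forall eps : R, 0 < eps ->
     \forall y \near x,
        f y - f x - dotp v (y - x) >= - (eps * norm2 (y - x))].

Definition limiting_subdiff (f : V -> R) (x : V) : set V :=
  [set v | exists (xs vs : nat -> V),
     [/\ xs @ \oo --> x, (f \o xs) @ \oo --> f x,
         (forall k, vs k \in frechet_subdiff f (xs k)) & vs @ \oo --> v]].

Definition stationary (alpha : R) (l : V -> R) (x : V) : Prop :=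
  exists v, v \in limiting_subdiff (r_alpha alpha) x /\ v + grad l x = 0.

End Defs.

(* Comparing x_(k+1) with x_k in the proximal problem and adding the descent lemma
   l (x + d) <= l x + <grad l x, d> + L/2 |d|^2 gives the sufficient decrease
   E (x_(k+1)) + (1/(2 lambda) - L/2) |x_(k+1) - x_k|^2 <= E (x_k), with a positive
   constant since lambda L < 1.  So the energies decrease, the iterates stay in a
   sublevel set of the coercive E, and Bolzano-Weierstrass yields a convergent
   subsequence.  Along any subsequence x_(phi n) -> z, continuity of E squeezes the
   steps x_(phi n + 1) - x_(phi n) to 0, hence x_(phi n + 1) -> z too.  Optimality of
   x_(phi n + 1) makes v_n = (x_(phi n) - lambda grad l (x_(phi n)) - x_(phi n + 1)) / lambda
   a proximal, hence Frechet, subgradient of r_alpha at x_(phi n + 1); as v_n tends to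
   - grad l z, this vector is a limiting subgradient of r_alpha at z. *)

From HB Require Import structures.
From mathcomp Require Import all_boot all_order all_algebra.
From mathcomp Require Import all_classical all_reals all_analysis.
From mathcomp Require Import ring lra.
Import Order.TTheory GRing.Theory Num.Theory.
Import numFieldNormedType.Exports.
Local Open Scope classical_set_scope.
Local Open Scope ring_scope.

Lemma continuous_sum (R : numFieldType) (T : topologicalType) n (f : 'I_n -> T -> R) :
  (forall i, continuous (f i)) -> continuous (fun t => \sum_i f i t).
Proof.
elim: n f => [f _ t|n IH f f_cont t].
  by under eq_fun do rewrite big_ord0; exact: cst_continuous.
under eq_fun do rewrite big_ord_recr /=.
by apply: continuousD; [apply: IH => i; exact: f_cont | exact: f_cont].
Qed.

Section Euclidean.
Context {R : realType} {N : nat}.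
Notation V := 'rV[R]_N.
Implicit Types (x y z : V) (c : R).

Lemma dotpC x y : dotp x y = dotp y x.
Proof. by apply: eq_bigr => i _; rewrite mulrC. Qed.

Lemma dotpDl x y z : dotp (x + y) z = dotp x z + dotp y z.
Proof. by rewrite /dotp -big_split; apply: eq_bigr => i _; rewrite !mxE mulrDl. Qed.

Lemma dotpZl c x y : dotp (c *: x) y = c * dotp x y.
Proof. by rewrite /dotp mulr_sumr; apply: eq_bigr => i _; rewrite !mxE mulrA. Qed.

Lemma dotpNl x y : dotp (- x) y = - dotp x y.
Proof. by rewrite -scaleN1r dotpZl mulN1r. Qed.

Lemma dotpBl x y z : dotp (x - y) z = dotp x z - dotp y z.
Proof. by rewrite dotpDl dotpNl. Qed.

Lemma dotpDr x y z : dotp x (y + z) = dotp x y + dotp x z.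
Proof. by rewrite dotpC dotpDl !(dotpC x). Qed.

Lemma dotpZr c x y : dotp x (c *: y) = c * dotp x y.
Proof. by rewrite dotpC dotpZl dotpC. Qed.

Lemma dotpNr x y : dotp x (- y) = - dotp x y.
Proof. by rewrite dotpC dotpNl dotpC. Qed.

Lemma dotp0l y : dotp 0 y = 0.
Proof. by rewrite -(scale0r 0) dotpZl mul0r. Qed.

Lemma norm2_ge0 x : 0 <= norm2 x.
Proof. exact: sqrtr_ge0. Qed.

Lemma sqr_norm2 x : norm2 x ^+ 2 = dotp x x.
Proof.
rewrite sqr_sqrtr; last by rewrite sumr_ge0 // => i _; rewrite sqr_ge0.
by apply: eq_bigr => i _; rewrite expr2.
Qed.

Lemma coord_le_norm2 x i : `|x ord0 i| <= norm2 x.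
Proof.
rewrite -sqrtr_sqr ler_sqrt; last by rewrite sumr_ge0 // => j _; rewrite sqr_ge0.
by rewrite (bigD1 i) //= lerDl sumr_ge0 // => j _; rewrite sqr_ge0.
Qed.

Lemma norm2_eq0 x : norm2 x = 0 -> x = 0.
Proof.
move=> x0; apply/rowP => j; rewrite mxE; apply/normr0_eq0/eqP.
by rewrite eq_le normr_ge0 -x0 coord_le_norm2.
Qed.

Lemma norm2Z c x : norm2 (c *: x) = `|c| * norm2 x.
Proof.
apply/eqP; rewrite -(@eqrXn2 _ 2) ?mulr_ge0 ?norm2_ge0 //.
by rewrite exprMn !sqr_norm2 dotpZl dotpZr mulrA -expr2 real_normK ?num_real.
Qed.

Lemma norm2_0 : norm2 (0 : V) = 0.
Proof. by have := norm2Z 0 0; rewrite scale0r normr0 mul0r. Qed.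

Lemma sqr_norm2D x y :
  norm2 (x + y) ^+ 2 = norm2 x ^+ 2 + 2 * dotp x y + norm2 y ^+ 2.
Proof. rewrite !sqr_norm2 dotpDl !dotpDr (dotpC y x); ring. Qed.

Lemma cauchy_schwarz x y : dotp x y <= norm2 x * norm2 y.
Proof.
set p := norm2 x; set q := norm2 y.
have [p0|p_neq0] := eqVneq p 0; first by rewrite (norm2_eq0 _ p0) dotp0l p0 mul0r.
have [q0|q_neq0] := eqVneq q 0.
  by rewrite (norm2_eq0 _ q0) dotpC dotp0l q0 mulr0.
have pq_gt0 : 0 < p * q by rewrite mulr_gt0 // lt0r ?p_neq0 ?q_neq0 ?norm2_ge0.
(* expand 0 <= |q x - p y|^2 = 2 p q (p q - <x, y>) *)
have := sqr_ge0 (norm2 (q *: x + (- p) *: y)).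
rewrite sqr_norm2D !norm2Z normrN !ger0_norm ?norm2_ge0 // dotpZl dotpZr -/p -/q.
move: pq_gt0; set d := dotp x y; nra.
Qed.

Lemma mx_norm_le_norm2 x : `|x| <= norm2 x.
Proof.
rewrite [leLHS]/Num.norm /=.
have [->|/mx_norm_neq0 [[i j] ->]] := eqVneq (mx_norm x) 0; first exact: norm2_ge0.
by rewrite /= (ord1 i) coord_le_norm2.
Qed.

Lemma continuous_norm2 : continuous (@norm2 R N).
Proof.
move=> y; apply: continuous_comp; last exact: sqrt_continuous.
apply: continuous_sum => i z.
exact: cvg_comp _ _ (@coord_continuous R 1 N ord0 i z) (@exprn_continuous R 2 _).
Qed.

Lemma continuous_norm1 : continuous (@norm1 R N).
Proof.
apply: continuous_sum => i z.
exact: cvg_comp _ _ (@coord_continuous R 1 N ord0 i z) (@norm_continuous _ R _).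
Qed.

Lemma continuous_r_alpha (alpha : R) : continuous (@r_alpha R N alpha).
Proof.
move=> y; apply: continuousB; first exact: continuous_norm1.
by apply: continuousM; [exact: cst_continuous | exact: continuous_norm2].
Qed.

Lemma near_norm2_lt (a : V) (e : R) : 0 < e -> \forall y \near a, norm2 (y - a) < e.
Proof.
have : (fun y => norm2 (y - a)) @ a --> norm2 (a - a).
  apply: continuous_comp; last exact: continuous_norm2.
  by apply: continuousB; [exact: cvg_id | exact: cst_continuous].
by rewrite subrr norm2_0 => /cvgr_lt; apply.
Qed.

Lemma norm2_lipschitz_continuous (W : normedModType R) (g : V -> W) (K : R) :
  (forall y z, `|g y - g z| <= K * norm2 (y - z)) -> continuous g.
Proof.
move=> g_lip z; apply/(cvgrPdist_lt (FF := nbhs_filter z)) => e e_gt0.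
have K1_gt0 : 0 < `|K| + 1 by rewrite ltr_wpDl.
near=> y; rewrite distrC; apply: le_lt_trans (g_lip y z) _.
apply: (@le_lt_trans _ _ ((`|K| + 1) * norm2 (y - z))).
  by rewrite ler_wpM2r ?norm2_ge0 // (le_trans (ler_norm K)) ?lerDl.
rewrite mulrC -ltr_pdivlMr //; near: y; exact: near_norm2_lt z _ (divr_gt0 e_gt0 K1_gt0).
Unshelve. all: by end_near. Qed.

End Euclidean.

Section Smooth.
Context {R : realType} {N : nat}.
Notation V := 'rV[R]_N.

Lemma diff_dotp_grad (f : V -> R) (x d : V) : 'd f x d = dotp (grad f x) d.
Proof.
rewrite [in LHS](row_sum_delta d) linear_sum; apply: eq_bigr => i _.
by rewrite linearZ /= mxE mulrC.
Qed.

Lemma is_derive_line (f : V -> R) (x d : V) (t : R) : differentiable f (x + t *: d) ->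
  is_derive t 1 (fun s => f (x + s *: d)) (dotp (grad f (x + t *: d)) d).
Proof.
move=> df.
have quotientE : (fun h : R => h^-1 *: (((fun s => f (x + s *: d)) \o shift t) (h *: 1)
                 - f (x + t *: d))) =
              (fun h : R => h^-1 *: ((f \o shift (x + t *: d)) (h *: d) - f (x + t *: d))).
  apply/funext => h /=; congr (_ *: (f _ - _)).
  by rewrite [h *: 1]mulr1 scalerDl addrCA addrC.
split; first by rewrite /derivable quotientE; exact: diff_derivable.
by rewrite /derive quotientE -/(derive f _ d) deriveE // diff_dotp_grad.
Qed.

Lemma lipschitz_dotp_le {G : V -> V} {L s : R} (x d : V) : 0 <= s ->
  (forall y z, norm2 (G y - G z) <= L * norm2 (y - z)) ->
  dotp (G (x + s *: d) - G x) d <= s * L * norm2 d ^+ 2.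
Proof.
move=> s_ge0 G_lip; apply: le_trans (cauchy_schwarz _ _) _.
rewrite expr2 mulrA ler_wpM2r ?norm2_ge0 //.
have := G_lip (x + s *: d) x.
by rewrite [x + _ - _]addrAC subrr add0r norm2Z ger0_norm // mulrCA mulrA.
Qed.

Lemma descent_lemma {f : V -> R} {L : R} (x d : V) :
  (forall y, differentiable f y) -> 0 <= L ->
  (forall y z, norm2 (grad f y - grad f z) <= L * norm2 (y - z)) ->
  f (x + d) <= f x + dotp (grad f x) d + L / 2 * norm2 d ^+ 2.
Proof.
move=> f_diff L_ge0 grad_lip.
set c := dotp (grad f x) d; set K := L / 2 * norm2 d ^+ 2.
(* h is nonincreasing on [0, 1]: its derivative is <grad f (x + s d) - grad f x, d> - s L |d|^2 *)
pose h := (fun s => f (x + s *: d)) - (fun s : R => s * c + s ^+ 2 * K).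
have poly_derive (s : R) : is_derive s 1 (fun s : R => s * c + s ^+ 2 * K) (c + 2 * s * K).
  have -> : (fun s : R => s * c + s ^+ 2 * K) = (id * cst c) + (id ^+ 2 * cst K).
    by apply/funext.
  apply: is_derive_eq.
  by rewrite /= !scaler0 !add0r expr1 [c%:A]mulr1 [(2 * s)%:A]mulr1 [K *: _]/GRing.scale /=; ring.
have h_derive (s : R) : is_derive s 1 h (dotp (grad f (x + s *: d)) d - (c + 2 * s * K)).
  by apply: is_deriveB; exact: is_derive_line.
have h_derivable s : derivable h s 1 by exact: (@ex_derive _ _ _ _ _ _ _ (h_derive s)).
have h_cont : {within `[0, 1], continuous h}.
  apply: continuous_subspaceT => s; apply: differentiable_continuous.
  exact/derivable1_diffP.
have h'_le0 s : s \in `]0, 1[%R -> derive1 h s <= 0.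
  rewrite in_itv /= => /andP[s_gt0 _].
  rewrite derive1E derive_val opprD addrA -dotpBl /K.
  have := lipschitz_dotp_le x d (ltW s_gt0) grad_lip; lra.
have := ler0_derive1_le_cc (fun s _ => h_derivable s) h'_le0 h_cont.
have unit_itv0 : (0 : R) \in `[0, 1]%R by rewrite in_itv /= lexx ler01.
have unit_itv1 : (1 : R) \in `[0, 1]%R by rewrite in_itv /= lexx ler01.
move=> /(_ 1 0 unit_itv1 unit_itv0 ler01) h10.
have : f (x + 1 *: d) - (1 * c + 1 ^+ 2 * K) <= f (x + 0 *: d) - (0 * c + 0 ^+ 2 * K).
  exact: h10.
rewrite scale1r scale0r addr0 expr1n expr0n /= !mul1r !mul0r; lra.
Qed.

End Smooth.

Lemma increasing_comp (phi psi : nat -> nat) :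
  (forall n, (phi n < phi n.+1)%N) -> (forall n, (psi n < psi n.+1)%N) ->
  forall n, (phi (psi n) < phi (psi n.+1))%N.
Proof. by move=> phi_incr psi_incr n; exact: homo_ltn ltn_trans phi_incr _ _ (psi_incr n). Qed.

Lemma increasing_cvg_oo (phi : nat -> nat) :
  (forall n, (phi n < phi n.+1)%N) -> phi @ \oo --> \oo.
Proof.
move=> phi_incr P [M _ MP]; exists M => // n /= Mn; apply: MP.
have ge_id : forall k, (k <= phi k)%N by elim=> // k IH; exact: leq_ltn_trans IH (phi_incr k).
exact: leq_trans Mn (ge_id n).
Qed.

Lemma cvgn_subseq (T : ptopologicalType) (u : nat -> T) (phi : nat -> nat) :
  (forall n, (phi n < phi n.+1)%N) -> cvgn u -> cvgn (u \o phi).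
Proof.
move=> phi_incr /cvg_ex [a ua]; apply/cvg_ex; exists a.
exact: cvg_comp _ _ (increasing_cvg_oo _ phi_incr) ua.
Qed.

Section BolzanoWeierstrass.
Context {R : realType} {N : nat}.
Notation V := 'rV[R]_N.

Lemma cvg_rV_coord {T : Type} (F : set_system T) {FF : Filter F} (u : T -> V) (a : V) :
  (forall i, (fun t => u t ord0 i) @ F --> a ord0 i) -> u @ F --> a.
Proof.
move=> u_cvg; apply/cvgrPdist_lt => e e_gt0.
have : \forall t \near F, forall i, `|a ord0 i - u t ord0 i| < e.
  by apply: filter_forall => i; move/cvgrPdist_lt: (u_cvg i); apply.
apply: filterS => t ut; rewrite [X in X < _]/Num.norm /=.
have [->|/mx_norm_neq0 [[i j] ->]] := eqVneq (mx_norm (a - u t)) 0; first exact: e_gt0.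
by rewrite (ord1 i) !mxE.
Qed.

Lemma bolzano_weierstrass_coords (u : nat -> V) (B : R) (m : nat) :
  (forall n, norm2 (u n) <= B) ->
  exists phi : nat -> nat, (forall n, (phi n < phi n.+1)%N) /\
    forall i : 'I_N, (i < m)%N -> cvgn (fun n => u (phi n) ord0 i).
Proof.
move=> u_bnd; elim: m => [|m [phi [phi_incr phi_cvg]]]; first by exists id.
have [mN|Nm] := ltnP m N; last first.
  by exists phi; split => // i im; apply: phi_cvg; exact: leq_trans (ltn_ord i) Nm.
pose im : 'I_N := Ordinal mN.
have im_bnd : bounded_fun (fun n => u (phi n) ord0 im).
  exists B; split; first exact: num_real.
  move=> M BM n _ /=; apply: le_trans (coord_le_norm2 _ _) _.
  exact: le_trans (u_bnd _) (ltW BM).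
have [psi /increasing_seqP psi_incr psi_cvg] := bolzano_weierstrass im_bnd.
exists (phi \o psi); split; first exact: increasing_comp _ _ phi_incr psi_incr.
move=> i; rewrite ltnS leq_eqVlt => /orP [/eqP i_eq|i_lt]; last first.
  exact: cvgn_subseq (fun n => u (phi n) ord0 i) _ psi_incr (phi_cvg i i_lt).
by have -> : i = im by apply: val_inj.
Qed.

Lemma bolzano_weierstrass_rV {u : nat -> V} {B : R} :
  (forall n, norm2 (u n) <= B) ->
  exists (phi : nat -> nat) (z : V),
    (forall n, (phi n < phi n.+1)%N) /\ (u \o phi) @ \oo --> z.
Proof.
move=> /(bolzano_weierstrass_coords _ _ N) [phi [phi_incr phi_cvg]].
exists phi, (\row_i lim ((fun n => u (phi n) ord0 i) @ \oo)); split => //.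
by apply: cvg_rV_coord => i; rewrite mxE; exact: phi_cvg.
Qed.

End BolzanoWeierstrass.

Section Subdifferential.
Context {R : realType} {N : nat}.
Notation V := 'rV[R]_N.

Lemma proximal_subgradient_frechet {f : V -> R} {x v : V} {c : R} :
  (forall y, - (c * norm2 (y - x) ^+ 2) <= f y - f x - dotp v (y - x)) ->
  frechet_subdiff f x v.
Proof.
move=> f_quad eps eps_gt0.
have c1_gt0 : 0 < `|c| + 1 by rewrite ltr_wpDl.
apply: filterS (near_norm2_lt x _ (divr_gt0 eps_gt0 c1_gt0)) => y.
rewrite ltr_pdivlMr // => yx; apply: le_trans (f_quad y); rewrite lerN2.
have n_ge0 := norm2_ge0 (y - x).
apply: (@le_trans _ _ ((`|c| + 1) * norm2 (y - x) ^+ 2)).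
  by rewrite ler_wpM2r ?sqr_ge0 // (le_trans (ler_norm c)) ?lerDl.
by rewrite expr2 mulrA ler_wpM2r // mulrC ltW.
Qed.

Lemma prox_subgradient {r : V -> R} {lam : R} {w x1 : V} : 0 < lam ->
  (forall y, r x1 + (2 * lam)^-1 * norm2 (x1 - w) ^+ 2
             <= r y + (2 * lam)^-1 * norm2 (y - w) ^+ 2) ->
  forall y, - ((2 * lam)^-1 * norm2 (y - x1) ^+ 2)
              <= r y - r x1 - dotp (lam^-1 *: (w - x1)) (y - x1).
Proof.
move=> lam_gt0 x1_min y; have := x1_min y.
have -> : y - w = (y - x1) + (x1 - w) by rewrite addrA subrK.
rewrite (sqr_norm2D (y - x1)).
have -> : dotp (lam^-1 *: (w - x1)) (y - x1) = - (lam^-1 * dotp (y - x1) (x1 - w)).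
  by rewrite dotpZl dotpC -[w - x1]opprB dotpNr mulrN.
set n := norm2 (y - x1) ^+ 2; set q := dotp _ _; set m := norm2 (x1 - w) ^+ 2.
have -> : (2 * lam)^-1 * (n + 2 * q + m) =
          (2 * lam)^-1 * n + lam^-1 * q + (2 * lam)^-1 * m.
  by field; rewrite gt_eqF.
lra.
Qed.

End Subdifferential.

Section ForwardBackward.
Context {R : realType} {N : nat}.
Notation V := 'rV[R]_N.
Context {alpha L lambda : R} {l : V -> R} {x : nat -> V}.
Hypothesis L_gt0 : 0 < L.
Hypothesis l_diff : forall y, differentiable l y.
Hypothesis grad_lip : forall y z, norm2 (grad l y - grad l z) <= L * norm2 (y - z).
Hypothesis lambda_gt0 : 0 < lambda.
Hypothesis lambda_lt : lambda < L^-1.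
Hypothesis x_prox : forall k y,
  r_alpha alpha (x k.+1)
    + (2 * lambda)^-1 * norm2 (x k.+1 - (x k - lambda *: grad l (x k))) ^+ 2
  <= r_alpha alpha y
    + (2 * lambda)^-1 * norm2 (y - (x k - lambda *: grad l (x k))) ^+ 2.

Let E (y : V) : R := r_alpha alpha y + l y.
Let c : R := (2 * lambda)^-1 - L / 2.

Let c_gt0 : 0 < c.
Proof.
have -> : c = (1 - lambda * L) / (2 * lambda) by rewrite /c; field; rewrite gt_eqF.
by rewrite divr_gt0 ?mulr_gt0 // subr_gt0 -ltr_pdivlMr // mul1r.
Qed.

Lemma sufficient_decrease k : E (x k.+1) + c * norm2 (x k.+1 - x k) ^+ 2 <= E (x k).
Proof.
set g := grad l (x k); set d := x k.+1 - x k.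
have := x_prox k (x k).
have -> : x k.+1 - (x k - lambda *: g) = d + lambda *: g.
  by rewrite opprB addrCA addrC.
have -> : x k - (x k - lambda *: g) = lambda *: g by rewrite opprB addrCA subrr addr0.
rewrite (sqr_norm2D d) !norm2Z dotpZr (ger0_norm (ltW lambda_gt0)).
have := descent_lemma (x k) d l_diff (ltW L_gt0) grad_lip.
rewrite /d addrCA subrr addr0 -/d dotpC -/g /E /c.
have -> : (2 * lambda)^-1 * (norm2 d ^+ 2 + 2 * (lambda * dotp d g) + (lambda * norm2 g) ^+ 2)
  = (2 * lambda)^-1 * norm2 d ^+ 2 + dotp d g + (2 * lambda)^-1 * (lambda * norm2 g) ^+ 2.
  by field; rewrite gt_eqF.
lra.
Qed.

Lemma energy_decreasing k : E (x k.+1) <= E (x k).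
Proof.
apply: le_trans (sufficient_decrease k); rewrite lerDl.
by rewrite mulr_ge0 ?sqr_ge0 ?ltW.
Qed.

Lemma iterates_bounded :
  (forall M, exists rho, forall y, rho <= norm2 y -> M <= E y) ->
  exists B, forall k, norm2 (x k) <= B.
Proof.
move=> E_coercive; have [rho rhoP] := E_coercive (E (x 0) + 1).
exists rho => k; rewrite leNgt; apply/negP => /ltW /rhoP.
have /nonincreasing_seqP E_mono : forall k, E (x k.+1) <= E (x k) := energy_decreasing.
by have := E_mono 0%N k isT; lra.
Qed.

Section LimitPoint.
Variables (phi : nat -> nat) (z : V).
Hypothesis phi_incr : forall n, (phi n < phi n.+1)%N.
Hypothesis x_phi_cvg : (x \o phi) @ \oo --> z.

Let E_continuous : continuous E.
Proof.
by move=> y; apply: continuousD; [exact: continuous_r_alpha | exact: differentiable_continuous].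
Qed.

Lemma step_subseq_cvg0 : (fun n => x (phi n).+1 - x (phi n)) @ \oo --> (0 : V).
Proof.
have E_phi_cvg : (fun n => E (x (phi n))) @ \oo --> E z.
  exact: cvg_comp _ _ x_phi_cvg (E_continuous z).
(* as phi n < (phi n).+1 <= phi n.+1, the energy drops by at least
   c |x_(phi n + 1) - x_(phi n)|^2 from x_(phi n) to x_(phi n.+1) *)
have gap_cvg0 : (fun n => E (x (phi n)) - E (x (phi n.+1))) @ \oo --> 0.
  rewrite -(subrr (E z)); apply: cvgB => //.
  exact: cvg_comp _ _ (increasing_cvg_oo _ (fun n => ltnSn n.+1)) E_phi_cvg.
apply/cvgr0Pnorm_lt => e e_gt0.
near=> n.
have gap_lt : E (x (phi n)) - E (x (phi n.+1)) < c * e ^+ 2.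
  by near: n; exact: cvgr_lt _ gap_cvg0 _ (mulr_gt0 c_gt0 (exprn_gt0 2 e_gt0)).
apply: le_lt_trans (mx_norm_le_norm2 _) _.
rewrite -ltr_sqr ?nnegrE ?norm2_ge0 ?(ltW e_gt0) // -(ltr_pM2l c_gt0).
apply: le_lt_trans gap_lt; rewrite lerBrDr addrC.
apply: le_trans (sufficient_decrease _); rewrite lerD2r.
by move/nonincreasing_seqP: energy_decreasing; apply.
Unshelve. all: by end_near. Qed.

Lemma limit_point_stationary : stationary alpha l z.
Proof.
have grad_continuous : continuous (grad l).
  apply: (@norm2_lipschitz_continuous _ _ _ _ L) => y y'.
  exact: le_trans (mx_norm_le_norm2 _) (grad_lip y y').
have succ_cvg : (fun n => x (phi n).+1) @ \oo --> z.
  have -> : (fun n => x (phi n).+1) = (x \o phi) + (fun n => x (phi n).+1 - x (phi n)).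
    by apply/funext => n /=; rewrite addrC subrK.
  by rewrite -[z]addr0; exact: cvgD x_phi_cvg step_subseq_cvg0.
pose v n := lambda^-1 *: ((x (phi n) - lambda *: grad l (x (phi n))) - x (phi n).+1).
have v_cvg : v @ \oo --> - grad l z.
  have -> : v = (fun n => - (lambda^-1 *: (x (phi n).+1 - x (phi n))) - grad l (x (phi n))).
    apply/funext => n; rewrite /v addrAC scalerBr scalerA mulVf ?gt_eqF //.
    by rewrite scale1r -scalerN opprB.
  suff : (fun n => - (lambda^-1 *: (x (phi n).+1 - x (phi n))) - grad l (x (phi n)))
           @ \oo --> - (lambda^-1 *: (0 : V)) - grad l z.
    by rewrite scaler0 oppr0 sub0r.
  apply: cvgB; last exact: cvg_comp _ _ x_phi_cvg (grad_continuous z).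
  by apply: cvgN; exact: cvgZl_tmp step_subseq_cvg0.
exists (- grad l z); split; last by rewrite addNr.
rewrite inE; exists (fun n => x (phi n).+1), v; split => //.
- exact: cvg_comp _ _ succ_cvg (continuous_r_alpha alpha z).
- move=> n; rewrite inE.
  exact: proximal_subgradient_frechet (prox_subgradient lambda_gt0 (x_prox _)).
Qed.

End LimitPoint.

End ForwardBackward.

Theorem theorem1 (R : realType) (N : nat) (alpha L lambda : R)
  (l : 'rV[R]_N -> R) (x0 : 'rV[R]_N) (x : nat -> 'rV[R]_N) :
  0 <= alpha ->
  0 < L ->
  (forall y : 'rV[R]_N, differentiable l y) ->
  (forall y z : 'rV[R]_N, norm2 (grad l y - grad l z) <= L * norm2 (y - z)) ->
  (* coercivity of E = r_alpha + l *)
  (forall M : R, exists rho : R, forall y : 'rV[R]_N,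
      rho <= norm2 y -> M <= r_alpha alpha y + l y) ->
  0 < lambda -> lambda < L^-1 ->
  x 0%N = x0 ->
  (* forward-backward splitting: x (k+1) is a minimizer of the prox objective *)
  (forall k : nat, forall y : 'rV[R]_N,
      r_alpha alpha (x k.+1)
        + (2 * lambda)^-1 * norm2 (x k.+1 - (x k - lambda *: grad l (x k))) ^+ 2
      <= r_alpha alpha y
        + (2 * lambda)^-1 * norm2 (y - (x k - lambda *: grad l (x k))) ^+ 2) ->
  (forall k : nat,
      r_alpha alpha (x k.+1) + l (x k.+1) <= r_alpha alpha (x k) + l (x k))
  /\ (exists (phi : nat -> nat) (xs : 'rV[R]_N),
        (forall n, (phi n < phi n.+1)%N) /\
        (x \o phi) @ \oo --> xs /\ stationary alpha l xs)
  /\ (forall (phi : nat -> nat) (z : 'rV[R]_N),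
        (forall n, (phi n < phi n.+1)%N) ->
        (x \o phi) @ \oo --> z -> stationary alpha l z).
Proof.
(* r_alpha is continuous for every alpha *)
move=> _ L_gt0 l_diff grad_lip E_coercive lambda_gt0 lambda_lt _ x_prox.
have E_decreasing := energy_decreasing L_gt0 l_diff grad_lip lambda_gt0 lambda_lt x_prox.
have limit_stationary :=
  limit_point_stationary L_gt0 l_diff grad_lip lambda_gt0 lambda_lt x_prox.
have [B x_bnd] := iterates_bounded L_gt0 l_diff grad_lip lambda_gt0 lambda_lt x_prox E_coercive.
have [phi [z [phi_incr x_phi_cvg]]] := bolzano_weierstrass_rV x_bnd.
split=> //; split=> //.
by exists phi, z; do 2!split => //; exact: limit_stationary.
Qed.
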